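(* If $L$ is an algebraic lattice, then $\dim_\nabla(L)=\mathrm{cov}(\mathrm{mi}_\Delta(L))$. In particular, for $n<\infty$, $\dim_\nabla(L)=n$ if and only if $n$ is the maximum size of an antichain of $\mathrm{mi}_\Delta(L)$.
   Context: $\mathrm{mi}_\Delta(L)$ is the set of completely meet-irreducible elements of $L$ (elements $m$ having an upper cover $m^*$ such that $z>m$ implies $z\geq m^*$). The complete join-dimension $\dim_\nabla(L)$ is the least cardinal $\kappa$ such that there is a one-to-one map from $L$ into a direct product of $\kappa$ complete chains preserving arbitrary joins. $\mathrm{cov}(P)$ is the least number of chains whose union is the poset $P$. *)

From Stdlib Require Import List.

Section Orders.
Variable T : Type.
Variable le : T -> T -> Prop.

Definition partial_order : Prop :=
  (forall x, le x x) /\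
  (forall x y, le x y -> le y x -> x = y) /\
  (forall x y z, le x y -> le y z -> le x z).

Definition upper_bound (S : T -> Prop) (x : T) : Prop := forall s, S s -> le s x.

Definition is_lub (S : T -> Prop) (x : T) : Prop :=
  upper_bound S x /\ forall y, upper_bound S y -> le x y.

Definition complete_lattice : Prop :=
  partial_order /\ forall S : T -> Prop, exists x, is_lub S x.

Definition compact (c : T) : Prop :=
  forall (S : T -> Prop) (s : T), is_lub S s -> le c s ->
    exists F : list T, (forall y, In y F -> S y) /\
      forall t, is_lub (fun y => In y F) t -> le c t.

Definition algebraic_lattice : Prop :=
  complete_lattice /\ forall x, is_lub (fun c => compact c /\ le c x) x.

Definition lt (x y : T) : Prop := le x y /\ x <> y.

Definition complete_chain : Prop :=
  complete_lattice /\ forall x y, le x y \/ le y x.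

(* mi_Delta(L): completely meet-irreducible elements *)
Definition mi_Delta (m : T) : Prop :=
  exists mstar, lt m mstar /\ forall z, lt m z -> le mstar z.

End Orders.

Arguments partial_order {T}.
Arguments upper_bound {T}.
Arguments is_lub {T}.
Arguments complete_lattice {T}.
Arguments compact {T}.
Arguments algebraic_lattice {T}.
Arguments lt {T}.
Arguments complete_chain {T}.
Arguments mi_Delta {T}.

Definition injective {A B : Type} (f : A -> B) : Prop :=
  forall x y, f x = f y -> x = y.

Definition card_le (J I : Type) : Prop := exists g : J -> I, injective g.

Definition prod_le {J : Type} {C : J -> Type} (leC : forall j, C j -> C j -> Prop)
  (u v : forall j, C j) : Prop := forall j, leC j (u j) (v j).

Definition join_embeds_in_chains {L : Type} (le : L -> L -> Prop) (J : Type) : Prop :=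
  exists (C : J -> Type) (leC : forall j, C j -> C j -> Prop),
    (forall j, complete_chain (leC j)) /\
    exists f : L -> forall j, C j,
      injective f /\
      forall (S : L -> Prop) (x : L), is_lub le S x ->
        is_lub (prod_le leC) (fun y => exists s, S s /\ y = f s) (f x).

Definition join_dim_le {L : Type} (le : L -> L -> Prop) (I : Type) : Prop :=
  exists J : Type, card_le J I /\ join_embeds_in_chains le J.

Definition mi_chain_cover {L : Type} (le : L -> L -> Prop) (J : Type) : Prop :=
  exists c : J -> L -> Prop,
    (forall j m, c j m -> mi_Delta le m) /\
    (forall j x y, c j x -> c j y -> le x y \/ le y x) /\
    (forall m, mi_Delta le m -> exists j, c j m).

Definition cov_mi_le {L : Type} (le : L -> L -> Prop) (I : Type) : Prop :=
  exists J : Type, card_le J I /\ mi_chain_cover le J.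

Definition fin (n : nat) : Type := {k : nat | k < n}.

Definition join_dim_eq_nat {L : Type} (le : L -> L -> Prop) (n : nat) : Prop :=
  join_dim_le le (fin n) /\ forall m, m < n -> ~ join_dim_le le (fin m).

Definition mi_antichain {L : Type} (le : L -> L -> Prop) (m : nat) (a : nat -> L) : Prop :=
  (forall k, k < m -> mi_Delta le (a k)) /\
  (forall k l, k < m -> l < m -> k <> l -> ~ le (a k) (a l)).

Definition max_antichain_mi {L : Type} (le : L -> L -> Prop) (n : nat) : Prop :=
  (exists a, mi_antichain le n a) /\
  (forall m a, mi_antichain le m a -> m <= n).

From Stdlib Require Import Classical ClassicalEpsilon FunctionalExtensionality
  PropExtensionality ProofIrrelevance List Lia Arith.
From mathcomp Require classical_sets.

(* A join-preserving embedding of L into a product of complete chains yields,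
   for each coordinate j, the chain of those m in mi_Delta(L) whose j-th
   coordinate differs from that of m*.  Conversely, a cover of mi_Delta(L) by
   chains C_j gives the embedding x |-> (C_j minus the elements above x)_j into
   the complete chains of down-sets of the C_j; it is one-to-one because in an
   algebraic lattice every element is the meet of the completely
   meet-irreducible elements above it.  The finite case is Dilworth's theorem
   for posets of finite width: Galvin's induction for finite posets, extended
   to infinite ones by Zorn's lemma on finitely extendable partial colorings. *)

Lemma map_seq_injective (f : nat -> nat) m n :
  (forall k, k < m -> f k < n) ->
  (forall k l, k < m -> l < m -> f k = f l -> k = l) ->
  NoDup (map f (seq 0 m)) /\ incl (map f (seq 0 m)) (seq 0 n).
Proof.
  intros Hf Hinj. split.
  - apply NoDup_map_NoDup_ForallPairs; [|apply seq_NoDup].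
    intros k l Hk Hl. apply in_seq in Hk, Hl. apply Hinj; lia.
  - intros y Hy. apply in_map_iff in Hy as [k [<- Hk]]. apply in_seq in Hk.
    apply in_seq. specialize (Hf k). lia.
Qed.

Lemma pigeonhole_lt (f : nat -> nat) m n :
  (forall k, k < m -> f k < n) ->
  (forall k l, k < m -> l < m -> f k = f l -> k = l) -> m <= n.
Proof.
  intros Hf Hinj. destruct (map_seq_injective f m n Hf Hinj) as [Hnd Hincl].
  rewrite <- (length_seq m 0), <- (length_map f (seq 0 m)), <- (length_seq n 0).
  exact (NoDup_incl_length Hnd Hincl).
Qed.

Lemma pigeonhole_lt_surj (f : nat -> nat) n :
  (forall k, k < n -> f k < n) ->
  (forall k l, k < n -> l < n -> f k = f l -> k = l) ->
  forall i, i < n -> exists k, k < n /\ f k = i.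
Proof.
  intros Hf Hinj i Hi. destruct (map_seq_injective f n n Hf Hinj) as [Hnd Hincl].
  assert (Hin : In i (map f (seq 0 n))).
  { apply (NoDup_length_incl Hnd (l' := seq 0 n)); [rewrite length_map, length_seq; lia|exact Hincl|apply in_seq; lia]. }
  apply in_map_iff in Hin as [k [Ek Hk]]. apply in_seq in Hk.
  exists k. split; [lia|exact Ek].
Qed.

Lemma bounded_nat_pred_max (Q : nat -> Prop) n :
  Q 0 -> (forall m, Q m -> m <= n) -> exists k, Q k /\ forall m, Q m -> m <= k.
Proof.
  intros Q0. induction n as [|n IH]; intros Hbound.
  - exists 0. split; [exact Q0|exact Hbound].
  - destruct (classic (Q (S n))) as [Hn|Hn]; [exists (S n); auto|].
    apply IH. intros m Qm. specialize (Hbound m Qm).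
    destruct (Nat.eq_dec m (S n)) as [->|]; [contradiction|lia].
Qed.

Lemma collect_lists {A} (D : A -> Prop) (R : nat -> list A -> Prop) n :
  (forall k, k < n -> exists F, (forall y, In y F -> D y) /\ R k F) ->
  exists G, (forall y, In y G -> D y) /\ forall k, k < n -> exists F, R k F /\ incl F G.
Proof.
  induction n as [|n IH]; intros H.
  - exists nil. split; [intros y []|intros k Hk; lia].
  - destruct IH as [G [HG HGk]]; [intros k Hk; apply H; lia|].
    destruct (H n (Nat.lt_succ_diag_r n)) as [F [HF RF]].
    exists (F ++ G). split.
    + intros y Hy. apply in_app_or in Hy as [Hy|Hy]; auto.
    + intros k Hk. destruct (Nat.eq_dec k n) as [->|Hkn].
      * exists F. split; [exact RF|intros y Hy; apply in_or_app; left; exact Hy].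
      * destruct (HGk k ltac:(lia)) as [F' [RF' HF']].
        exists F'. split; [exact RF'|intros y Hy; apply in_or_app; right; auto].
Qed.

Lemma zorn_union (T : Type) (P : (T -> Prop) -> Prop) :
  (forall F : (T -> Prop) -> Prop, (forall X, F X -> P X) ->
     (forall X Y, F X -> F Y -> (forall t, X t -> Y t) \/ (forall t, Y t -> X t)) ->
     P (fun t => exists X, F X /\ X t)) ->
  exists A, P A /\ forall B, (forall t, A t -> B t) -> P B -> forall t, B t -> A t.
Proof.
  intros H.
  destruct (@classical_sets.Zorn_bigcup T P) as [A [PA HA]].
  - intros F FP Ftot.
    replace (classical_sets.bigcup F (fun X => X)) with (fun t => exists X, F X /\ X t).
    + apply H; auto.
    + apply functional_extensionality; intro t; apply propositional_extensionality.
      split; [intros [X [FX Xt]]; econstructor; eauto|intros [X FX Xt]; eauto].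
  - exists A. split; [exact PA|].
    intros B AB PB t Bt. apply NNPP; intro nA.
    apply (HA B); [split; [exact AB|intro BA; apply nA, BA, Bt]|exact PB].
Qed.

Section Antichains.
Context {T : Type} (le : T -> T -> Prop).

Definition antichain (P : T -> Prop) (m : nat) (a : nat -> T) : Prop :=
  (forall k, k < m -> P (a k)) /\
  (forall k l, k < m -> l < m -> k <> l -> ~ le (a k) (a l)).

Definition width_le (P : T -> Prop) (n : nat) : Prop :=
  forall m a, antichain P m a -> m <= n.

Definition chain (K : T -> Prop) : Prop :=
  forall x y, K x -> K y -> le x y \/ le y x.

Definition chain_coloring (P : T -> Prop) (n : nat) (col : T -> nat) : Prop :=
  (forall x, P x -> col x < n) /\
  (forall x y, P x -> P y -> col x = col y -> le x y \/ le y x).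

Definition setminus (P K : T -> Prop) (x : T) : Prop := P x /\ ~ K x.

Lemma antichain_sub P Q m a :
  (forall x, P x -> Q x) -> antichain P m a -> antichain Q m a.
Proof. intros HPQ [Ha Hanti]. split; auto. Qed.

Lemma antichain_prefix P m n a : n <= m -> antichain P m a -> antichain P n a.
Proof. intros Hnm [Ha Hanti]. split; intros; [apply Ha|apply Hanti]; auto; lia. Qed.

Lemma antichain_snoc P n b a :
  antichain P n b -> P a -> (forall k, k < n -> ~ le (b k) a /\ ~ le a (b k)) ->
  antichain P (S n) (fun k => if k <? n then b k else a).
Proof.
  intros [Hb Hanti] Pa Hinc. split.
  - intros k Hk. destruct (Nat.ltb_spec k n); auto.
  - intros k l Hk Hl Hkl.
    destruct (Nat.ltb_spec k n), (Nat.ltb_spec l n).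
    + apply Hanti; auto.
    + apply Hinc; auto.
    + apply Hinc; lia.
    + lia.
Qed.

Lemma width_le_of_no_antichain P n :
  (forall a, ~ antichain P n a) -> width_le P (n - 1).
Proof.
  intros Hno m a Ha. destruct (Nat.lt_ge_cases m n) as [Hmn|Hnm]; [lia|].
  exfalso. apply (Hno a), (antichain_prefix P m n a Hnm Ha).
Qed.

Lemma chain_coloring_sub P Q n col :
  (forall x, Q x -> P x) -> chain_coloring P n col -> chain_coloring Q n col.
Proof. intros HQP [Hlt Hc]. split; auto. Qed.

Lemma antichain_meets_every_color P n col b :
  chain_coloring P n col -> antichain P n b ->
  forall i, i < n -> exists k, k < n /\ col (b k) = i.
Proof.
  intros [Hlt Hc] [Hb Hanti]. apply pigeonhole_lt_surj.
  - intros k Hk. apply Hlt, Hb, Hk.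
  - intros k l Hk Hl E. apply NNPP; intro Hkl.
    destruct (Hc _ _ (Hb k Hk) (Hb l Hl) E); [apply (Hanti k l)|apply (Hanti l k)]; auto.
Qed.

Lemma chain_coloring_add_chain P K m n col :
  chain K -> chain_coloring (setminus P K) m col -> m < n ->
  exists col', chain_coloring P n col'.
Proof.
  intros HK [Hlt Hc] Hmn.
  exists (fun x => if excluded_middle_informative (K x) then m else col x). split.
  - intros x Px. destruct (excluded_middle_informative (K x)) as [Kx|Kx]; [lia|].
    specialize (Hlt x (conj Px Kx)). lia.
  - intros x y Px Py.
    destruct (excluded_middle_informative (K x)) as [Kx|Kx],
             (excluded_middle_informative (K y)) as [Ky|Ky]; intro E.
    + apply HK; assumption.
    + specialize (Hlt y (conj Py Ky)). lia.
    + specialize (Hlt x (conj Px Kx)). lia.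
    + apply Hc; [split|split|]; assumption.
Qed.

End Antichains.

Section Dilworth.
Context {T : Type} (le : T -> T -> Prop).
Hypothesis po : partial_order le.

Let le_refl : forall x, le x x := proj1 po.
Let le_antisym : forall x y, le x y -> le y x -> x = y := proj1 (proj2 po).
Let le_trans : forall x y z, le x y -> le y z -> le x z := proj2 (proj2 po).
Let eq_dec (x y : T) : {x = y} + {x <> y} := excluded_middle_informative (x = y).

Definition listed (P : T -> Prop) (l : list T) : Prop := forall x, P x -> In x l.

Lemma listed_maximal P l x :
  P x -> listed P l -> exists a, P a /\ forall z, P z -> le a z -> z = a.
Proof.
  intros Px Hl.
  assert (H : forall N l x, length l <= N -> P x -> (forall z, P z -> le x z -> In z l) ->
            exists a, P a /\ forall z, P z -> le a z -> z = a).
  { clear x l Px Hl. induction N as [|N IH]; intros l x Hlen Px Hup.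
    - destruct l; [destruct (Hup x Px (le_refl x))|simpl in Hlen; lia].
    - destruct (classic (exists z, P z /\ le x z /\ z <> x)) as [[z [Pz [xz zx]]]|Hmax].
      + apply (IH (remove eq_dec x l) z); [|exact Pz|].
        * pose proof (remove_length_lt eq_dec l x (Hup x Px (le_refl x))). lia.
        * intros w Pw zw. apply in_in_remove.
          -- intros ->. apply zx, le_antisym; assumption.
          -- apply Hup; [exact Pw|apply le_trans with z; assumption].
      + exists x. split; [exact Px|]. intros z Pz xz.
        apply NNPP; intro zx. apply Hmax. eauto. }
  apply (H (length l) l x); auto.
Qed.

Lemma listed_chain_greatest P l x :
  chain le P -> P x -> listed P l -> exists a, P a /\ forall z, P z -> le z a.
Proof.
  intros HP Px Hl. destruct (listed_maximal P l x Px Hl) as [a [Pa Hmax]].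
  exists a. split; [exact Pa|]. intros z Pz.
  destruct (HP z a Pz Pa) as [h|h]; [exact h|]. rewrite (Hmax z Pz h). apply le_refl.
Qed.

(* Galvin's proof: in each color class, the largest element lying on a
   maximum antichain; these tops form a maximum antichain themselves. *)
Lemma antichain_tops Q l n col b0 :
  listed Q l -> chain_coloring le Q n col -> antichain le Q n b0 ->
  exists x, antichain le Q n x /\
    forall b j, antichain le Q n b -> j < n -> le (b j) (x (col (b j))).
Proof.
  intros Hl Hcol Hb0.
  pose (good i z := col z = i /\ exists b j, antichain le Q n b /\ j < n /\ b j = z).
  assert (Hgood : forall i z, good i z -> Q z).
  { intros i z [_ [b [j [Hb [Hj <-]]]]]. exact (proj1 Hb j Hj). }
  assert (Htop : forall i, i < n -> exists x, good i x /\ forall z, good i z -> le z x).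
  { intros i Hi.
    destruct (antichain_meets_every_color le Q n col b0 Hcol Hb0 i Hi) as [j [Hj Ej]].
    apply (listed_chain_greatest (good i) l (b0 j)).
    - intros z w gz gw. apply (proj2 Hcol); [apply (Hgood i z gz)|apply (Hgood i w gw)|].
      destruct gz as [-> _], gw as [-> _]. reflexivity.
    - split; [exact Ej|exists b0, j; auto].
    - intros z gz. apply Hl, (Hgood i z gz). }
  set (x i := epsilon (inhabits (b0 0)) (fun x => good i x /\ forall z, good i z -> le z x)).
  assert (Hx : forall i, i < n -> good i (x i) /\ forall z, good i z -> le z (x i)).
  { intros i Hi. apply epsilon_spec, Htop, Hi. }
  assert (Hbelow : forall b j, antichain le Q n b -> j < n -> le (b j) (x (col (b j)))).
  { intros b j Hb Hj. apply (proj2 (Hx _ (proj1 Hcol _ (proj1 Hb j Hj)))).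
    split; [reflexivity|exists b, j; auto]. }
  exists x. split; [split|exact Hbelow].
  - intros i Hi. apply (Hgood i), Hx, Hi.
  - intros i i' Hi Hi' Hii' Hle.
    destruct (Hx i' Hi') as [[Ei' [b [p [Hb [Hp Ep]]]]] _].
    destruct (antichain_meets_every_color le Q n col b Hcol Hb i Hi) as [q [Hq Eq]].
    assert (Hqp : q <> p) by (intros ->; rewrite Ep in Eq; congruence).
    apply (proj2 Hb q p Hq Hp Hqp). rewrite Ep.
    apply le_trans with (x i); [|exact Hle].
    pose proof (Hbelow b q Hb Hq) as Hq'. rewrite Eq in Hq'. exact Hq'.
Qed.

(* Some top [x i0] lies below the maximal [a], since otherwise adding [a] to
   the tops gives an antichain of size [n + 1]; removing the chain formed by [a]
   and the elements of color [i0] below [x i0] then lowers the width. *)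
Lemma dilworth_reduce P l n a col b0 :
  listed P l -> width_le le P n -> P a -> (forall z, P z -> le a z -> z = a) ->
  chain_coloring le (setminus P (eq a)) n col -> antichain le (setminus P (eq a)) n b0 ->
  exists K, K a /\ chain le K /\ width_le le (setminus P K) (n - 1).
Proof.
  intros Hl HP Pa Hamax Hcol Hb0.
  set (P' := setminus P (eq a)) in *.
  destruct (antichain_tops P' l n col b0) as [x [Hx Hbelow]]; try assumption.
  { intros z [Pz _]. exact (Hl z Pz). }
  assert (Hi0 : exists i0, i0 < n /\ le (x i0) a).
  { apply NNPP; intro Hno.
    assert (Hant : antichain le P (S n) (fun k => if k <? n then x k else a)).
    { apply antichain_snoc; [|exact Pa|].
      - apply antichain_sub with P'; [intros z []; auto|exact Hx].
      - intros k Hk. split; [intro h; apply Hno; eauto|].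
        intro h. destruct (proj1 Hx k Hk) as [Pxk ne].
        apply ne. symmetry. exact (Hamax _ Pxk h). }
    specialize (HP _ _ Hant). lia. }
  destruct Hi0 as [i0 [Hi0 Hxa]].
  exists (fun z => z = a \/ (P' z /\ col z = i0 /\ le z (x i0))).
  split; [left; reflexivity|split].
  - intros z w [->|[P'z [cz zx]]] [->|[P'w [cw wx]]].
    + left. apply le_refl.
    + right. apply le_trans with (x i0); assumption.
    + left. apply le_trans with (x i0); assumption.
    + apply (proj2 Hcol); congruence.
  - intros m b Hb. apply NNPP; intro Hm.
    assert (Hb' : antichain le P' n b).
    { apply antichain_prefix with m; [lia|].
      refine (antichain_sub le _ _ m b _ Hb).
      intros z [Pz HK]. split; [exact Pz|intros <-; apply HK; left; reflexivity]. }
    destruct (antichain_meets_every_color le P' n col b Hcol Hb' i0 Hi0) as [j [Hj Ej]].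
    apply (proj2 (proj1 Hb j ltac:(lia))). right.
    split; [exact (proj1 Hb' j Hj)|split; [exact Ej|]].
    pose proof (Hbelow b j Hb' Hj) as Hbj. rewrite Ej in Hbj. exact Hbj.
Qed.

Lemma dilworth_listed P l n :
  listed P l -> width_le le P n -> exists col, chain_coloring le P n col.
Proof.
  enough (H : forall N P l n, length l <= N -> listed P l -> width_le le P n ->
            exists col, chain_coloring le P n col) by eauto.
  clear P l n.
  induction N as [|N IH]; intros P l n Hlen Hl HP;
    (destruct (classic (exists a, P a)) as [[a0 Pa0]|Hempty];
     [|exists (fun _ => 0); split; intros x; [intros Px|intros y Px]; exfalso; eauto]).
  - destruct l; [destruct (Hl a0 Pa0)|simpl in Hlen; lia].
  - destruct (listed_maximal P l a0 Pa0 Hl) as [a [Pa Hamax]].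
    assert (Hlen' : length (remove eq_dec a l) <= N).
    { pose proof (remove_length_lt eq_dec l a (Hl a Pa)). lia. }
    assert (Hl' : forall K, K a -> listed (setminus P K) (remove eq_dec a l)).
    { intros K Ka z [Pz nKz]. apply in_in_remove; [intros ->; exact (nKz Ka)|exact (Hl z Pz)]. }
    assert (Hsub : forall m b, antichain le (setminus P (eq a)) m b -> m <= n).
    { intros m b Hb. apply (HP m b), (antichain_sub le (setminus P (eq a))); [intros z []; auto|exact Hb]. }
    destruct (bounded_nat_pred_max (fun m => exists b, antichain le (setminus P (eq a)) m b) n)
      as [k [[b0 Hb0] Hk]].
    { exists (fun _ => a). split; intros; lia. }
    { intros m [b Hb]. exact (Hsub m b Hb). }
    destruct (IH (setminus P (eq a)) _ k Hlen' (Hl' _ eq_refl)) as [col Hcol].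
    { intros m b Hb. apply Hk. eauto. }
    destruct (Nat.lt_ge_cases k n) as [Hkn|Hkn].
    + apply (chain_coloring_add_chain le P (eq a) k n col); [|exact Hcol|exact Hkn].
      intros ? ? <- <-. left. apply le_refl.
    + assert (k = n) as -> by (specialize (Hsub k b0 Hb0); lia).
      assert (Hn : 0 < n) by (apply (HP 1 (fun _ => a)); split; [intros; exact Pa|intros; lia]).
      destruct (dilworth_reduce P l n a col b0) as [K [Ka [HK HPK]]]; try assumption.
      destruct (IH (setminus P K) _ (n - 1) Hlen' (Hl' K Ka) HPK) as [col' Hcol'].
      apply (chain_coloring_add_chain le P K (n - 1) n col'); [exact HK|exact Hcol'|lia].
Qed.

Definition agrees (A : T * nat -> Prop) (F : list T) (col : T -> nat) : Prop :=
  forall x i, In x F -> A (x, i) -> col x = i.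

(* The compactness step: a maximal finitely extendable [A] (Zorn) is total. *)
Definition finitely_extendable (D : T -> Prop) (n : nat) (A : T * nat -> Prop) : Prop :=
  forall F, (forall x, In x F -> D x) ->
    exists col, chain_coloring le (fun x => In x F) n col /\ agrees A F col.

Lemma finitely_extendable_functional D n A x i j :
  finitely_extendable D n A -> D x -> A (x, i) -> A (x, j) -> i = j.
Proof.
  intros HA Dx Ai Aj. destruct (HA (x :: nil)) as [col [_ Hag]].
  - intros y [<-|[]]. exact Dx.
  - rewrite <- (Hag x i), <- (Hag x j); simpl; auto.
Qed.

Lemma finitely_extendable_empty D n :
  width_le le D n -> finitely_extendable D n (fun _ => False).
Proof.
  intros HD F HF. destruct (dilworth_listed (fun x => In x F) F n) as [col Hcol].
  - intros x Hx. exact Hx.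
  - intros m a Ha. apply (HD m a), (antichain_sub le (fun x => In x F)); auto.
  - exists col. split; [exact Hcol|intros x i _ []].
Qed.

Lemma finitely_extendable_chain_union D n (Fam : (T * nat -> Prop) -> Prop) :
  width_le le D n -> (forall X, Fam X -> finitely_extendable D n X) ->
  (forall X Y, Fam X -> Fam Y -> (forall p, X p -> Y p) \/ (forall p, Y p -> X p)) ->
  finitely_extendable D n (fun p => exists X, Fam X /\ X p).
Proof.
  intros HD HFam Htot F HF.
  set (U p := exists X, Fam X /\ X p).
  destruct (classic (exists M0, Fam M0)) as [[M0 FM0]|Hno].
  2:{ destruct (finitely_extendable_empty D n HD F HF) as [col [Hcol _]].
      exists col. split; [exact Hcol|]. intros x i _ [X [FX _]]. exfalso; eauto. }
  assert (Ufun : forall x i j, D x -> U (x, i) -> U (x, j) -> i = j).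
  { intros x i j Dx [X [FX Xi]] [Y [FY Yj]].
    destruct (Htot X Y FX FY) as [h|h].
    - exact (finitely_extendable_functional D n Y x i j (HFam Y FY) Dx (h _ Xi) Yj).
    - exact (finitely_extendable_functional D n X x i j (HFam X FX) Dx Xi (h _ Yj)). }
  assert (HM : exists M, Fam M /\ forall x i, In x F -> U (x, i) -> M (x, i)).
  { induction F as [|y F IHF].
    - exists M0. split; [exact FM0|intros x i []].
    - destruct IHF as [M [FM HM]]; [intros x Hx; apply HF; right; exact Hx|].
      destruct (classic (exists i0, U (y, i0))) as [[i0 Uy]|Hnone].
      2:{ exists M. split; [exact FM|]. intros x i [<-|Hx] Ux; [exfalso; eauto|auto]. }
      pose proof Uy as [M' [FM' M'y]].
      assert (Hbig : exists M'', Fam M'' /\ (forall p, M p -> M'' p) /\ (forall p, M' p -> M'' p)).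
      { destruct (Htot M M' FM FM') as [h|h]; [exists M'|exists M]; repeat split; auto. }
      destruct Hbig as [M'' [FM'' [HMM'' HM'M'']]].
      exists M''. split; [exact FM''|]. intros x i [<-|Hx] Ux.
      + rewrite (Ufun y i i0 (HF y (or_introl eq_refl)) Ux Uy). apply HM'M'', M'y.
      + apply HMM'', HM; assumption. }
  destruct HM as [M [FM HM]].
  destruct (HFam M FM F HF) as [col [Hcol Hag]].
  exists col. split; [exact Hcol|]. intros x i Hx Ux. apply Hag, HM; assumption.
Qed.

(* Each extension of [A] by [(x, k)] fails on some finite [F_k]; a coloring of
   [x] together with all the [F_k] then contradicts the failure for [k = col x]. *)
Lemma maximal_finitely_extendable_total D n A :
  finitely_extendable D n A ->
  (forall B, (forall p, A p -> B p) -> finitely_extendable D n B -> forall p, B p -> A p) ->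
  forall x, D x -> exists i, A (x, i).
Proof.
  intros HA Amax x Dx. apply NNPP; intro Hx.
  assert (Hbad : forall k, k < n -> exists F, (forall y, In y F -> D y) /\
            forall col, chain_coloring le (fun y => In y F) n col -> agrees A F col -> col x <> k).
  { intros k Hk. apply NNPP; intro Hno. apply Hx. exists k.
    apply (Amax (fun p => A p \/ p = (x, k))); [intros p Ap; left; exact Ap| |right; reflexivity].
    intros F HF. apply NNPP; intro Hnc. apply Hno. exists F. split; [exact HF|].
    intros col Hcol Hag Ex. apply Hnc. exists col. split; [exact Hcol|].
    intros y i Hy [Ay|E]; [exact (Hag y i Hy Ay)|injection E as -> ->; exact Ex]. }
  destruct (collect_lists D _ n Hbad) as [G [HG HGk]].
  destruct (HA (x :: G)) as [col [Hcol Hag]].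
  { intros y [<-|Hy]; auto. }
  destruct (HGk (col x) (proj1 Hcol x (or_introl eq_refl))) as [F [Hbadk HFG]].
  apply (Hbadk col); [| |reflexivity].
  - apply (chain_coloring_sub le (fun y => In y (x :: G))); [intros y Hy; right; auto|exact Hcol].
  - intros y i Hy Ay. apply Hag; [right; auto|exact Ay].
Qed.

Theorem dilworth D n : width_le le D n -> exists col, chain_coloring le D n col.
Proof.
  intros HD.
  destruct (zorn_union (T * nat) (finitely_extendable D n)) as [A [HA Amax]].
  { intros Fam HFam Htot. apply finitely_extendable_chain_union; assumption. }
  pose proof (maximal_finitely_extendable_total D n A HA Amax) as Htotal.
  set (col x := epsilon (inhabits 0) (fun i => A (x, i))).
  assert (Hcol : forall x, D x -> A (x, col x)).
  { intros x Dx. apply epsilon_spec, Htotal, Dx. }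
  exists col. split.
  - intros x Dx. destruct (HA (x :: nil)) as [c [Hc Hag]]; [intros y [<-|[]]; exact Dx|].
    rewrite <- (Hag x (col x)); [apply (proj1 Hc)|..]; simpl; auto.
  - intros x y Dx Dy Exy. destruct (HA (x :: y :: nil)) as [c [Hc Hag]].
    { intros z [<-|[<-|[]]]; assumption. }
    apply (proj2 Hc); simpl; auto.
    rewrite (Hag x (col x)), (Hag y (col y)); simpl; auto.
Qed.

End Dilworth.

Section Lattices.
Context {L : Type} (le : L -> L -> Prop).
Hypothesis po : partial_order le.
Hypothesis lub_exists : forall S : L -> Prop, exists x, is_lub le S x.

Let le_refl : forall x, le x x := proj1 po.
Let le_antisym : forall x y, le x y -> le y x -> x = y := proj1 (proj2 po).
Let le_trans : forall x y z, le x y -> le y z -> le x z := proj2 (proj2 po).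

Lemma lub_pair_of_le a b : le a b -> is_lub le (fun s => s = a \/ s = b) b.
Proof.
  intros Hab. split.
  - intros s [-> | ->]; [exact Hab|apply le_refl].
  - intros y Hy. apply Hy. right. reflexivity.
Qed.

Definition join_preserving {J} (C : J -> Type) (leC : forall j, C j -> C j -> Prop)
  (f : L -> forall j, C j) : Prop :=
  forall S x, is_lub le S x -> is_lub (prod_le leC) (fun y => exists s, S s /\ y = f s) (f x).

Lemma join_preserving_monotone {J} C leC (f : L -> forall j : J, C j) a b :
  join_preserving C leC f -> le a b -> prod_le leC (f a) (f b).
Proof.
  intros Hf Hab. apply (proj1 (Hf _ _ (lub_pair_of_le a b Hab))). exists a. auto.
Qed.

Lemma join_preserving_pair {J} C leC (f : L -> forall j : J, C j) a b z :
  (forall j, complete_chain (leC j)) -> join_preserving C leC f ->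
  is_lub le (fun s => s = a \/ s = b) z ->
  forall j, leC j (f z j) (f a j) \/ leC j (f z j) (f b j).
Proof.
  intros Hch Hf Hz j.
  set (v k := if excluded_middle_informative (leC k (f a k) (f b k)) then f b k else f a k).
  assert (Hv : prod_le leC (f z) v).
  { apply (proj2 (Hf _ _ Hz)). intros y [s [[-> | ->] ->]] k; unfold v;
      destruct (excluded_middle_informative (leC k (f a k) (f b k))) as [h|h];
      destruct (Hch k) as [[[Hrefl _] _] Htotal]; auto.
    destruct (Htotal (f a k) (f b k)); tauto. }
  specialize (Hv j). unfold v in Hv.
  destruct (excluded_middle_informative (leC j (f a j) (f b j))); auto.
Qed.

Lemma join_embedding_chain_cover J : join_embeds_in_chains le J -> mi_chain_cover le J.
Proof.
  intros [C [leC [Hch [f [Hinj Hf]]]]].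
  exists (fun j m => exists ms, lt le m ms /\ (forall z, lt le m z -> le ms z) /\ f m j <> f ms j).
  split; [|split].
  - intros j m [ms [Hms [Hmin _]]]. exists ms. auto.
  - intros j m m' [ms [Hms [Hmin Hj]]] [ms' [Hms' [Hmin' Hj']]].
    apply NNPP; intro Hinc.
    destruct (lub_exists (fun s => s = m \/ s = m')) as [z Hz].
    assert (Hstar : forall p ps, lt le p ps -> (forall w, lt le p w -> le ps w) ->
              p = m \/ p = m' -> leC j (f z j) (f p j) -> f p j = f ps j).
    { intros p ps [Hpps _] Hpmin Hp Hzp.
      destruct (Hch j) as [[[_ [HCanti HCtrans]] _] _].
      assert (Hpz : le p z) by (apply (proj1 Hz); exact Hp).
      assert (Hpsz : le ps z).
      { apply Hpmin. split; [exact Hpz|]. intros <-. apply Hinc.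
        destruct Hp as [-> | ->]; [right|left]; apply (proj1 Hz); auto. }
      apply HCanti; [exact (join_preserving_monotone C leC f p ps Hf Hpps j)|].
      apply HCtrans with (f z j); [exact (join_preserving_monotone C leC f ps z Hf Hpsz j)|exact Hzp]. }
    destruct (join_preserving_pair C leC f m m' z Hch Hf Hz j) as [h|h].
    + exact (Hj (Hstar m ms Hms Hmin (or_introl eq_refl) h)).
    + exact (Hj' (Hstar m' ms' Hms' Hmin' (or_intror eq_refl) h)).
  - intros m [ms [[Hle Hne] Hmin]]. apply NNPP; intro Hn.
    apply Hne, Hinj, functional_extensionality_dep. intro j.
    apply NNPP; intro Hj. apply Hn. exists j, ms. repeat split; auto.
Qed.

Lemma chain_finite_upper_bound K y F :
  chain le K -> K y -> (forall t, In t F -> K t) -> exists w, K w /\ forall t, In t F -> le t w.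
Proof.
  intros HK Ky. induction F as [|t F IH]; intros HF.
  - exists y. split; [exact Ky|intros t []].
  - destruct IH as [w [Kw Hw]]; [intros s Hs; apply HF; right; exact Hs|].
    destruct (HK t w (HF t (or_introl eq_refl)) Kw) as [h|h].
    + exists w. split; [exact Kw|]. intros s [<-|Hs]; auto.
    + exists t. split; [apply HF; left; reflexivity|].
      intros s [<-|Hs]; [apply le_refl|apply le_trans with w; auto].
Qed.

Lemma algebraic_compact_separation x y :
  (forall x, is_lub le (fun c => compact le c /\ le c x) x) -> ~ le x y ->
  exists c, compact le c /\ le c x /\ ~ le c y.
Proof.
  intros Halg Hxy. apply NNPP; intro Hn. apply Hxy, (proj2 (Halg x)).
  intros c [Hc Hcx]. apply NNPP; intro Hcy. apply Hn. eauto.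
Qed.

Lemma compact_not_below_chain_join c y K s :
  compact le c -> chain le K -> K y -> (forall z, K z -> ~ le c z) -> is_lub le K s ->
  ~ le c s.
Proof.
  intros Hc HK Ky HKc Hs Hle. destruct (Hc K s Hs Hle) as [F [HF HcF]].
  destruct (chain_finite_upper_bound K y F HK Ky HF) as [w [Kw Hw]].
  destruct (lub_exists (fun t => In t F)) as [t Ht].
  apply (HKc w Kw), le_trans with t; [apply HcF, Ht|apply (proj2 Ht); exact Hw].
Qed.

(* Zorn on the chains above [y] avoiding [c]: the join of a maximal one is
   the required [s]. *)
Lemma compact_avoiding_maximal c y :
  compact le c -> ~ le c y ->
  exists s, le y s /\ ~ le c s /\ forall z, le s z -> ~ le c z -> z = s.
Proof.
  intros Hc Hcy.
  destruct (zorn_union L (fun A => chain le A /\ forall z, A z -> le y z /\ ~ le c z))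
    as [A [[HA HAy] HAmax]].
  { intros Fam HFam Htot. split.
    - intros z w [X [FX Xz]] [Y [FY Yw]].
      destruct (Htot X Y FX FY) as [h|h];
        [apply (proj1 (HFam Y FY))|apply (proj1 (HFam X FX))]; auto.
    - intros z [X [FX Xz]]. apply (proj2 (HFam X FX)), Xz. }
  set (K z := z = y \/ A z).
  assert (HK : chain le K).
  { intros z w [->|Az] [->|Aw].
    - left. apply le_refl.
    - left. apply (HAy w Aw).
    - right. apply (HAy z Az).
    - apply HA; assumption. }
  destruct (lub_exists K) as [s Hs].
  assert (Hys : le y s) by (apply (proj1 Hs); left; reflexivity).
  assert (Hcs : ~ le c s).
  { apply (compact_not_below_chain_join c y K s Hc HK (or_introl eq_refl)); [|exact Hs].
    intros z [->|Az]; [exact Hcy|exact (proj2 (HAy z Az))]. }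
  exists s. split; [exact Hys|split; [exact Hcs|]].
  intros z Hsz Hcz.
  assert (HAs : forall t, A t -> le t z).
  { intros t At. apply le_trans with s; [apply (proj1 Hs); right; exact At|exact Hsz]. }
  assert (Az : A z).
  { apply (HAmax (fun t => A t \/ t = z)); [intros t At; left; exact At| |right; reflexivity].
    split.
    - intros t w [At| ->] [Aw| ->].
      + apply HA; assumption.
      + left. exact (HAs t At).
      + right. exact (HAs w Aw).
      + left. apply le_refl.
    - intros t [At| ->]; [exact (HAy t At)|split; [apply le_trans with s|]; assumption]. }
  apply le_antisym; [apply (proj1 Hs); right; exact Az|exact Hsz].
Qed.

Lemma maximal_avoiding_mi c s :
  ~ le c s -> (forall z, le s z -> ~ le c z -> z = s) -> mi_Delta le s.
Proof.
  intros Hcs Hmax. destruct (lub_exists (fun t => t = s \/ t = c)) as [ms [Hup Hleast]].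
  exists ms. split; [split|].
  - apply Hup. left. reflexivity.
  - intros Es. apply Hcs. rewrite Es. apply Hup. right. reflexivity.
  - intros z [Hsz Hne]. apply Hleast. intros t [-> | ->]; [exact Hsz|].
    apply NNPP; intro Hcz. apply Hne. symmetry. exact (Hmax z Hsz Hcz).
Qed.

Definition mi_separating : Prop :=
  forall x y, ~ le x y -> exists m, mi_Delta le m /\ le y m /\ ~ le x m.

Lemma algebraic_mi_separating :
  (forall x, is_lub le (fun c => compact le c /\ le c x) x) -> mi_separating.
Proof.
  intros Halg x y Hxy.
  destruct (algebraic_compact_separation x y Halg Hxy) as [c [Hc [Hcx Hcy]]].
  destruct (compact_avoiding_maximal c y Hc Hcy) as [s [Hys [Hcs Hmax]]].
  exists s. split; [exact (maximal_avoiding_mi c s Hcs Hmax)|split; [exact Hys|]].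
  intro Hxs. apply Hcs, le_trans with x; assumption.
Qed.

Lemma le_of_mi_above x y :
  mi_separating -> (forall m, mi_Delta le m -> le y m -> le x m) -> le x y.
Proof.
  intros Hsep H. apply NNPP; intro Hxy.
  destruct (Hsep x y Hxy) as [m [Hm [Hym Hxm]]]. exact (Hxm (H m Hm Hym)).
Qed.

Definition downset (K U : L -> Prop) : Prop :=
  (forall m, U m -> K m) /\ (forall m m', U m -> K m' -> le m' m -> U m').

Definition chain_downsets (K : L -> Prop) : Type := {U : L -> Prop | downset K U}.

Definition downset_le (K : L -> Prop) (U V : chain_downsets K) : Prop :=
  forall m, proj1_sig U m -> proj1_sig V m.

Lemma chain_downsets_complete_chain K : chain le K -> complete_chain (downset_le K).
Proof.
  intros HK. split; [split; [split; [|split]|]|].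
  - intros U m h. exact h.
  - intros U V hUV hVU. apply eq_sig_hprop; [intros; apply proof_irrelevance|].
    apply functional_extensionality; intro m. apply propositional_extensionality.
    split; [apply hUV|apply hVU].
  - intros U V W hUV hVW m h. apply hVW, hUV, h.
  - intros S.
    assert (HW : downset K (fun m => exists U : chain_downsets K, S U /\ proj1_sig U m)).
    { split.
      - intros m [U [_ Um]]. exact (proj1 (proj2_sig U) m Um).
      - intros m m' [U [SU Um]] Km' hle. exists U.
        split; [exact SU|exact (proj2 (proj2_sig U) m m' Um Km' hle)]. }
    exists (exist _ _ HW). split.
    + intros U SU m Um. exists U. split; assumption.
    + intros V HV m [U [SU Um]]. exact (HV U SU m Um).
  - intros [U [HU1 HU2]] [V [HV1 HV2]]. unfold downset_le; simpl.
    destruct (classic (forall m, U m -> V m)) as [h|h]; [left; exact h|right].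
    apply not_all_ex_not in h as [u hu]. apply imply_to_and in hu as [Uu nVu].
    intros v Vv. destruct (HK u v (HU1 u Uu) (HV1 v Vv)) as [h|h].
    + exfalso. exact (nVu (HV2 v u Vv (HU1 u Uu) h)).
    + exact (HU2 u v Uu (HV1 v Vv) h).
Qed.

Lemma downset_not_above K x : downset K (fun m => K m /\ ~ le x m).
Proof.
  split; [intros m []; assumption|].
  intros m m' [_ Hxm] Km' Hm'm. split; [exact Km'|].
  intro Hxm'. apply Hxm, le_trans with m'; assumption.
Qed.

Lemma chain_cover_join_embedding J :
  mi_separating -> mi_chain_cover le J -> join_embeds_in_chains le J.
Proof.
  intros Hsep [c [Hmi [Hc Hcov]]].
  exists (fun j => chain_downsets (c j)), (fun j => downset_le (c j)). split.
  { intro j. apply chain_downsets_complete_chain. exact (Hc j). }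
  exists (fun x j => exist _ (fun m => c j m /\ ~ le x m) (downset_not_above (c j) x)). split.
  - intros x y Exy.
    assert (Hk : forall j m, (c j m /\ ~ le x m) <-> (c j m /\ ~ le y m)).
    { intros j m. apply (f_equal (fun g => proj1_sig (g j) m)) in Exy. simpl in Exy.
      rewrite Exy. reflexivity. }
    assert (Hab : forall a b, (forall j m, c j m -> ~ le a m -> ~ le b m) -> le a b).
    { intros a b H. apply le_of_mi_above; [exact Hsep|]. intros m Hm Hbm.
      destruct (Hcov m Hm) as [j Hj]. apply NNPP; intro Ham. exact (H j m Hj Ham Hbm). }
    apply le_antisym; apply Hab; intros j m Hj Hm.
    + exact (proj2 (proj1 (Hk j m) (conj Hj Hm))).
    + exact (proj2 (proj2 (Hk j m) (conj Hj Hm))).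
  - intros S x [Hup Hleast]. split.
    + intros Y [s [Ss ->]] j m [Hm Hsm]. split; [exact Hm|].
      intro Hxm. apply Hsm, le_trans with x; [exact (Hup s Ss)|exact Hxm].
    + intros Y HY j m [Hm Hxm].
      destruct (classic (exists s, S s /\ ~ le s m)) as [[s [Ss Hsm]]|Hno].
      * exact (HY _ (ex_intro _ s (conj Ss eq_refl)) j m (conj Hm Hsm)).
      * exfalso. apply Hxm, Hleast. intros s Ss. apply NNPP; intro Hsm. apply Hno. eauto.
Qed.

Lemma mi_chain_cover_width_le J n :
  mi_chain_cover le J -> card_le J (fin n) -> width_le le (mi_Delta le) n.
Proof.
  intros [c [_ [Hc Hcov]]] [g Hg] m a [Ha Hanti].
  destruct m as [|m]; [lia|].
  destruct (Hcov (a 0) (Ha 0 ltac:(lia))) as [j0 _].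
  set (jj k := epsilon (inhabits j0) (fun j => c j (a k))).
  assert (Hjj : forall k, k < S m -> c (jj k) (a k)).
  { intros k Hk. apply epsilon_spec, Hcov, Ha, Hk. }
  apply (pigeonhole_lt (fun k => proj1_sig (g (jj k)))).
  - intros k _. exact (proj2_sig (g (jj k))).
  - intros k l Hk Hl E.
    assert (Ejj : jj k = jj l).
    { apply Hg, eq_sig_hprop; [intros; apply proof_irrelevance|exact E]. }
    apply NNPP; intro Hkl. pose proof (Hjj k Hk) as ck. rewrite Ejj in ck.
    destruct (Hc _ _ _ ck (Hjj l Hl)); [apply (Hanti k l)|apply (Hanti l k)]; auto.
Qed.

Lemma width_le_mi_chain_cover n :
  width_le le (mi_Delta le) n -> cov_mi_le le (fin n).
Proof.
  intros Hw. destruct (dilworth le po (mi_Delta le) n Hw) as [col [Hlt Hc]].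
  exists (fin n). split; [exists (fun j => j); intros ? ? E; exact E|].
  exists (fun j m => mi_Delta le m /\ col m = proj1_sig j). split; [|split].
  - intros j m [Hm _]. exact Hm.
  - intros j x y [Hx Ex] [Hy Ey]. apply Hc; congruence.
  - intros m Hm. exists (exist _ (col m) (Hlt m Hm)). split; auto.
Qed.

End Lattices.

Theorem corollary7p5 (L : Type) (le : L -> L -> Prop) :
  algebraic_lattice le ->
  (forall I : Type, join_dim_le le I <-> cov_mi_le le I) /\
  (forall n : nat, join_dim_eq_nat le n <-> max_antichain_mi le n).
Proof.
  intros [[po Hlub] Halg].
  assert (Hdim_cov : forall I : Type, join_dim_le le I <-> cov_mi_le le I).
  { intros I. split; intros [J [HJ HJL]]; exists J; split; auto.
    - exact (join_embedding_chain_cover le po Hlub J HJL).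
    - exact (chain_cover_join_embedding le po J (algebraic_mi_separating le po Hlub Halg) HJL). }
  assert (Hdim_width : forall n, join_dim_le le (fin n) <-> width_le le (mi_Delta le) n).
  { intros n. rewrite Hdim_cov. split.
    - intros [J [HJ Hcov]]. exact (mi_chain_cover_width_le le J n Hcov HJ).
    - exact (width_le_mi_chain_cover le po n). }
  split; [exact Hdim_cov|]. intros n.
  unfold join_dim_eq_nat, max_antichain_mi. rewrite Hdim_width. split.
  - intros [Hn Hmin]. split; [|exact Hn].
    apply NNPP; intro Hno. destruct n as [|n].
    + destruct (Hlub (fun _ => False)) as [z _].
      apply Hno. exists (fun _ => z). split; intros; lia.
    + apply (Hmin n (Nat.lt_succ_diag_r n)), Hdim_width.
      replace n with (S n - 1) by lia.
      apply width_le_of_no_antichain. intros a Ha. apply Hno. eauto.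
  - intros [[a Ha] Hn]. split; [exact Hn|].
    intros m Hm Hdim. apply Hdim_width in Hdim. specialize (Hdim n a Ha). lia.
Qed.
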